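(* Let $(R,\mathfrak{m})$ be a Noetherian local ring, $M$ a finitely generated $R$-module, $S \subseteq M$ a subset, and $\mathscr{E}$ an $R$-submodule of $\mathrm{Hom}_R(M,R)$. Let $I^{\mathscr{E}}(S,M) := \{y \in \langle S \rangle \mid f(y) \in \mathfrak{m} \text{ for all } f \in \mathscr{E}\}$, an $R$-submodule of $\langle S\rangle$. Then $\delta^{\mathscr{E}}_\mathfrak{m}(S,M) = \lambda_R(\langle S\rangle / I^{\mathscr{E}}(S,M))$, where $\lambda_R$ denotes length.
   Context: $\langle S\rangle$ is the submodule generated by $S$. A free $\mathscr{E}$-summand of $M$ is a direct summand $F$ (with complement $G$) of $M$, $F \cong R^n$, such that each coordinate of the projection $M \to F \cong R^n$ along $G$ lies in $\mathscr{E}$. $\delta^{\mathscr{E}}_\mathfrak{m}(S,M)$ is the largest integer $n\ge 0$ such that there is a free $\mathscr{E}$-summand of $M$ of rank $n$ contained in $\langle S\rangle$. *)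

From mathcomp Require Import all_boot all_algebra.
Set Implicit Arguments.
Unset Strict Implicit.
Unset Printing Implicit Defensive.
Import GRing.Theory.
Local Open Scope ring_scope.

Section Defs.
Variable R : comUnitRingType.

(* (R, m) is local: the non-units form an ideal, which is then the unique
   maximal ideal m. *)
Definition maxideal : R -> Prop := fun x => x \isn't a GRing.unit.
Definition is_local : Prop :=
  forall x y : R, maxideal x -> maxideal y -> maxideal (x + y).

Variable V : lmodType R.

Definition submod (P : V -> Prop) : Prop :=
  [/\ P 0, (forall x y, P x -> P y -> P (x + y)) & (forall a x, P x -> P (a *: x))].

Definition genmod (S : V -> Prop) : V -> Prop := fun x =>
  exists (n : nat) (v : 'I_n -> V) (c : 'I_n -> R),
    (forall i, S (v i)) /\ x = \sum_(i < n) c i *: v i.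

Definition fin_gen (P : V -> Prop) : Prop :=
  exists (n : nat) (v : 'I_n -> V),
    forall x, P x <-> genmod (fun y => exists i, y = v i) x.

(* Length of the quotient N / I for submodules I <= N of V, via the lattice
   correspondence: sup of lengths k of strict chains I = N_0 < ... < N_k = N. *)
Definition strict_chain (I N : V -> Prop) (k : nat) : Prop :=
  exists C : nat -> (V -> Prop),
    [/\ forall j, submod (C j),
        (forall x, C 0%N x <-> I x),
        (forall x, C k x <-> N x),
        (forall j, (j < k)%N -> forall x, C j x -> C j.+1 x) &
        (forall j, (j < k)%N -> exists x, C j.+1 x /\ ~ C j x)].

Definition quot_length (N I : V -> Prop) (k : nat) : Prop :=
  strict_chain I N k /\ (forall k', strict_chain I N k' -> (k' <= k)%N).

End Defs.

Definition noetherian (R : comUnitRingType) : Prop :=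
  forall I : R^o -> Prop, submod I -> fin_gen I.

Section Hom.
Variables (R : comUnitRingType) (M : lmodType R).

Definition is_hom (f : M -> R) : Prop :=
  forall a x y, f (a *: x + y) = a * f x + f y.

Definition hom_submod (E : (M -> R) -> Prop) : Prop :=
  [/\ forall f, E f -> is_hom f,
      E (fun _ => 0),
      (forall f g, E f -> E g -> E (fun x => f x + g x)) &
      (forall a f, E f -> E (fun x => a * f x))].

(* F is a free E-summand of M of rank n: F is a direct summand with
   complement G, F is free with basis e_1..e_n (i.e. F ~ R^n), and each
   coordinate p_i of the projection M -> F ~ R^n along G lies in E. *)
Definition free_E_summand (E : (M -> R) -> Prop) (F : M -> Prop) (n : nat) :=
  exists (G : M -> Prop) (e : 'I_n -> M) (p : 'I_n -> M -> R),
    submod F /\ submod G /\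
    (forall x, F x -> G x -> x = 0) /\
    (forall x, exists f g, [/\ F f, G g & x = f + g]) /\
    (forall i, F (e i)) /\
    (forall x, F x -> exists c : 'I_n -> R, x = \sum_(i < n) c i *: e i) /\
    (forall c : 'I_n -> R, \sum_(i < n) c i *: e i = 0 -> forall i, c i = 0) /\
    (forall x, G (x - \sum_(i < n) p i x *: e i)) /\
    (forall i, E (p i)).

Definition delta_is (E : (M -> R) -> Prop) (S : M -> Prop) (d : nat) : Prop :=
  (exists F, free_E_summand E F d /\ (forall x, F x -> genmod S x)) /\
  (forall n F, free_E_summand E F n -> (forall x, F x -> genmod S x) -> (n <= d)%N).

Definition IE (E : (M -> R) -> Prop) (S : M -> Prop) : M -> Prop :=
  fun y => genmod S y /\ forall f, E f -> maxideal (f y).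

End Hom.

From mathcomp Require Import all_boot all_algebra.
From Stdlib Require Import Classical IndefiniteDescription FunctionalExtensionality.
Set Implicit Arguments. Unset Strict Implicit. Unset Printing Implicit Defensive.
Import GRing.Theory.
Local Open Scope ring_scope.

(* Call x_0, ..., x_(k-1) in <S> IE-independent when every combination
   sum c_i x_i lying in I := I^E(S, M) has all c_i in m.  Both sides of the
   equality equal the largest size d of such a family.  It is finite because an
   IE-independent family has a biorthogonal partner f_0, ..., f_(k-1) in E
   (Gram-Schmidt, using that every z in <S> \ I has some f in E with f z a
   unit), and M, generated by g elements, carries no biorthogonal system of
   size > g.
   - delta = d: a biorthogonal system spans a free E-summand, and the basis of
     a free E-summand together with its coordinate forms is biorthogonal.
   - length = d: for a family of maximal size, I + <x_0, ..., x_(j-1)> is a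
     strict chain from I to <S>; conversely, picking x_j in C_(j+1) \ C_j along
     a strict chain gives an IE-independent family, since if c_j were the last
     unit coefficient of a combination in I, then c_j x_j would lie in C_j. *)

Section Hom.
Variables (R : comUnitRingType) (M : lmodType R) (f : M -> R).
Hypothesis hf : is_hom f.

Lemma hom0 : f 0 = 0.
Proof.
have h := hf 1 0 0; rewrite scaler0 addr0 mul1r in h.
by apply: (@addrI _ (f 0)); rewrite addr0 -h.
Qed.

Lemma homD x y : f (x + y) = f x + f y.
Proof. by rewrite -[x in LHS]scale1r hf mul1r. Qed.

Lemma homZ a x : f (a *: x) = a * f x.
Proof. by rewrite -[_ *: x]addr0 hf hom0 addr0. Qed.

Lemma homB x y : f (x - y) = f x - f y.
Proof. by rewrite homD -scaleN1r homZ mulN1r. Qed.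

Lemma hom_sum (I : Type) (r : seq I) (P : pred I) (F : I -> M) :
  f (\sum_(i <- r | P i) F i) = \sum_(i <- r | P i) f (F i).
Proof. exact: (big_morph f homD hom0). Qed.

End Hom.

Section Submodule.
Variables (R : comUnitRingType) (M : lmodType R).

Section Closure.
Variables (Q : M -> Prop) (hQ : submod Q).

Lemma submod0 : Q 0. Proof. by case: hQ. Qed.

Lemma submodD x y : Q x -> Q y -> Q (x + y).
Proof. by case: hQ => _ h _; apply: h. Qed.

Lemma submodZ a x : Q x -> Q (a *: x).
Proof. by case: hQ => _ _ h; apply: h. Qed.

Lemma submodB x y : Q x -> Q y -> Q (x - y).
Proof. by move=> hx hy; rewrite -scaleN1r; apply: submodD => //; apply: submodZ. Qed.

Lemma submod_sum (I : Type) (r : seq I) (P : pred I) (F : I -> M) :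
  (forall i, P i -> Q (F i)) -> Q (\sum_(i <- r | P i) F i).
Proof. by move=> hF; apply: big_ind => //; [exact: submod0 | exact: submodD]. Qed.

End Closure.

Definition span_of n (e : 'I_n -> M) : M -> Prop :=
  fun y => exists c : 'I_n -> R, y = \sum_(i < n) c i *: e i.

Lemma submod_span n (e : 'I_n -> M) : submod (span_of e).
Proof.
split.
- by exists (fun _ => 0); rewrite big1 // => i _; rewrite scale0r.
- move=> _ _ [c1 ->] [c2 ->]; exists (fun i => c1 i + c2 i).
  by rewrite -big_split; apply: eq_bigr => i _; rewrite scalerDl.
- move=> a _ [c ->]; exists (fun i => a * c i).
  by rewrite scaler_sumr; apply: eq_bigr => i _; rewrite scalerA.
Qed.

Lemma sum_delta_scale n (e : 'I_n -> M) (i : 'I_n) :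
  \sum_(l < n) (l == i)%:R *: e l = e i.
Proof.
rewrite (bigD1 i) //= eqxx scale1r big1 ?addr0 // => l /negPf ->.
by rewrite scale0r.
Qed.

Lemma span_of_mem n (e : 'I_n -> M) i : span_of e (e i).
Proof. by exists (fun l => (l == i)%:R); rewrite sum_delta_scale. Qed.

Lemma submod_genmod (S : M -> Prop) : submod (genmod S).
Proof.
split.
- by exists 0%N, (fun _ => 0), (fun _ => 0); split; [case | rewrite big_ord0].
- move=> _ _ [n1 [v1 [c1 [h1 ->]]]] [n2 [v2 [c2 [h2 ->]]]].
  exists (n1 + n2)%N, (fun i => match split i with inl a => v1 a | inr b => v2 b end),
    (fun i => match split i with inl a => c1 a | inr b => c2 b end); split.
  + by move=> i; case: (split i).
  + rewrite big_split_ord /=; congr (_ + _); apply: eq_bigr => i _.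
    * by rewrite (unsplitK (inl i)).
    * by rewrite (unsplitK (inr i)).
- move=> a _ [n [v [c [h ->]]]]; exists n, v, (fun i => a * c i); split => //.
  by rewrite scaler_sumr; apply: eq_bigr => i _; rewrite scalerA.
Qed.

Lemma genmod_min (S Q : M -> Prop) x :
  submod Q -> (forall y, S y -> Q y) -> genmod S x -> Q x.
Proof.
move=> hQ hS [n [v [c [h ->]]]].
by apply: submod_sum => // i _; apply: submodZ => //; apply: hS.
Qed.

Lemma genmod_span n (e : 'I_n -> M) y :
  genmod (fun y => exists i, y = e i) y -> span_of e y.
Proof. by apply: genmod_min; [exact: submod_span | move=> _ [i ->]; exact: span_of_mem]. Qed.

End Submodule.

Arguments submodZ {R M Q} hQ {a x}.
Arguments submod_sum {R M Q} hQ {I r P F}.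

Lemma sum_mul_delta (R : pzSemiRingType) k (F : 'I_k -> R) (j : 'I_k) :
  \sum_(l < k) F l * (l == j)%:R = F j.
Proof. by rewrite (bigD1 j) //= eqxx mulr1 big1 ?addr0 // => l /negPf ->; rewrite mulr0. Qed.

Lemma biorthogonal_size_le (R : comUnitRingType) (M : lmodType R) g (v : 'I_g -> M)
    k (x : nat -> M) (f : nat -> M -> R) :
  (forall y, genmod (fun y => exists i, y = v i) y) ->
  (forall i, (i < k)%N -> is_hom (f i)) ->
  (forall i j, (i < k)%N -> (j < k)%N -> f i (x j) = (i == j)%:R) -> (k <= g)%N.
Proof.
move=> hv hh hf.
have hd (j : 'I_k) : {d : 'I_g -> R | x j = \sum_(l < g) d l *: v l}.
  exact/constructive_indefinite_description/genmod_span.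
pose P := \matrix_(i < k, l < g) f i (v l).
pose Q := \matrix_(l < g, j < k) sval (hd j) l.
apply: (@mulmx1_min _ _ _ P Q); apply/matrixP => i j; rewrite !mxE.
have hi := hh i (ltn_ord i).
under eq_bigr => l _ do rewrite !mxE mulrC -(homZ hi).
by rewrite -hom_sum // -(svalP (hd j)) hf.
Qed.

Lemma ex_max_nat (P : nat -> Prop) b :
  P 0%N -> (forall k, P k -> (k <= b)%N) -> exists d, P d /\ forall k, P k -> (k <= d)%N.
Proof.
elim: b => [|b IH] h0 hb; first by exists 0%N.
have [hPb | hnPb] := classic (P b.+1); first by exists b.+1.
apply: IH => // k hk; move: (hb k hk); rewrite leq_eqVlt => /predU1P [ek|//].
by case: hnPb; rewrite -ek.
Qed.

Section IEIndependence.
Variables (R : comUnitRingType) (M : lmodType R) (S : M -> Prop) (E : (M -> R) -> Prop).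
Hypothesis hE : hom_submod E.

Lemma E_hom f : E f -> is_hom f.
Proof. by case: hE => h _ _ _; apply: h. Qed.

Lemma E_add f g : E f -> E g -> E (fun w => f w + g w).
Proof. by case: hE => _ _ h _; apply: h. Qed.

Lemma E_scale a f : E f -> E (fun w => a * f w).
Proof. by case: hE => _ _ _ h; apply: h. Qed.

Lemma E_sum k (b : nat -> R) (f : nat -> M -> R) :
  (forall j, (j < k)%N -> E (f j)) -> E (fun w => \sum_(j < k) b j * f j w).
Proof.
elim: k => [|k IH] hf.
  have -> : (fun w => \sum_(j < 0) b j * f j w) = (fun _ => 0).
    by apply: functional_extensionality => w; rewrite big_ord0.
  by case: hE.
have -> : (fun w => \sum_(j < k.+1) b j * f j w) =
          (fun w => \sum_(j < k) b j * f j w + b k * f k w).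
  by apply: functional_extensionality => w; rewrite big_ord_recr.
apply: E_add; last exact/E_scale/hf.
by apply: IH => j hj; apply/hf/ltnW.
Qed.

Lemma IE_maxidealZ a y : maxideal a -> genmod S y -> IE E S (a *: y).
Proof.
move=> ha hy; split; first exact: (submodZ (submod_genmod S) hy).
by move=> f Ef; rewrite (homZ (E_hom Ef)) /maxideal unitrM negb_and ha.
Qed.

Hypothesis hloc : is_local R.

Lemma IE_submod : submod (IE E S).
Proof.
split.
- split; first exact: submod0 (submod_genmod S).
  by move=> f Ef; rewrite (hom0 (E_hom Ef)) /maxideal unitr0.
- move=> x y [hx fx] [hy fy]; split; first exact: (submodD (submod_genmod S) hx hy).
  by move=> f Ef; rewrite (homD (E_hom Ef)); apply: hloc; [apply: fx | apply: fy].
- move=> a x [hx fx]; split; first exact: (submodZ (submod_genmod S) hx).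
  by move=> f Ef; rewrite (homZ (E_hom Ef)) /maxideal unitrM negb_and (fx f Ef) orbT.
Qed.

Definition IE_indep k (x : nat -> M) : Prop :=
  (forall i, (i < k)%N -> genmod S (x i)) /\
  forall c : nat -> R, IE E S (\sum_(i < k) c i *: x i) ->
    forall i, (i < k)%N -> maxideal (c i).

Definition biorthogonal k (x : nat -> M) (f : nat -> M -> R) : Prop :=
  (forall i, (i < k)%N -> E (f i)) /\
  forall i j, (i < k)%N -> (j < k)%N -> f i (x j) = (i == j)%:R.

Lemma biorthogonal_coord k x f (c : 'I_k -> R) (i : 'I_k) :
  biorthogonal k x f -> f i (\sum_(l < k) c l *: x l) = c i.
Proof.
move=> [hfE hfx]; have hi := E_hom (hfE i (ltn_ord i)).
rewrite hom_sum //; under eq_bigr => l _ do rewrite (homZ hi) hfx // eq_sym.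
exact: sum_mul_delta.
Qed.

Lemma biorthogonal_IE_indep k x f :
  (forall i, (i < k)%N -> genmod S (x i)) -> biorthogonal k x f -> IE_indep k x.
Proof.
move=> hxS hf; split => // c [_ hc] i hi.
have := hc _ (hf.1 i hi).
by rewrite (biorthogonal_coord (fun l : 'I_k => c l) (Ordinal hi) hf).
Qed.

Lemma IE_indep_prefix j k x : (j <= k)%N -> IE_indep k x -> IE_indep j x.
Proof.
move=> hjk [hxS hxI]; split=> [i hi|c hc i hi]; first exact/hxS/(leq_trans hi).
have := hxI (fun i => if (i < j)%N then c i else 0) _ i (leq_trans hi hjk).
rewrite hi; apply.
suff -> : \sum_(l < k) (if (l < j)%N then c l else 0) *: x l = \sum_(l < j) c l *: x l by [].
rewrite (big_ord_widen _ (fun l => c l *: x l) hjk) [RHS]big_mkcond.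
by apply: eq_bigr => l _; case: ifP; rewrite ?scale0r.
Qed.

Definition IE_span j (x : nat -> M) : M -> Prop :=
  fun y => exists (c : nat -> R) y0, IE E S y0 /\ y = y0 + \sum_(i < j) c i *: x i.

Lemma IE_indep_notin_span k x j : IE_indep k x -> (j < k)%N -> ~ IE_span j x (x j).
Proof.
move=> hx hjk [c [y0 [hy0 ey]]].
have [_ hxI] := IE_indep_prefix hjk hx.
pose c' i := if (i < j)%N then - c i else 1.
have : IE E S (\sum_(i < j.+1) c' i *: x i).
  rewrite big_ord_recr /= /c' ltnn scale1r.
  under eq_bigr => i _ do rewrite ltn_ord scaleNr.
  by rewrite sumrN ey addrCA addNr addr0.
by move/hxI/(_ j (ltnSn j)); rewrite /c' ltnn /maxideal unitr1.
Qed.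

Lemma biorthogonal_extend k x f h :
  biorthogonal k x f -> E h ->
  (forall j, (j < k)%N -> h (x j) = 0) -> h (x k) = 1 ->
  biorthogonal k.+1 x (fun i => if i == k then h else fun w => f i w - f i (x k) * h w).
Proof.
move=> [hfE hfx] hEh hx0 hxk.
have lt_k i : (i < k.+1)%N -> i != k -> (i < k)%N.
  by move=> hi hik; rewrite ltn_neqAle hik -ltnS.
split=> [i hi | i j hi hj].
  case: eqP => [//|/eqP hik].
  have -> : (fun w => f i w - f i (x k) * h w) = (fun w => f i w + - f i (x k) * h w).
    by apply: functional_extensionality => w; rewrite mulNr.
  exact/E_add/E_scale/hEh/hfE/lt_k.
case: (eqVneq i k) => [-> | hik]; case: (eqVneq j k) => [-> | hjk].
- by rewrite hxk.
- by rewrite hx0 ?lt_k.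
- by rewrite hxk mulr1 subrr (negbTE hik).
- by rewrite hx0 ?lt_k // mulr0 subr0 hfx ?lt_k.
Qed.

Lemma not_IE_unit z : genmod S z -> ~ IE E S z -> exists2 g, E g & g z \is a GRing.unit.
Proof.
move=> hz hnz; apply: NNPP => hn; apply: hnz; split=> // g Eg.
by apply/negP => hu; apply: hn; exists g.
Qed.

Lemma IE_indep_biorthogonal k x : IE_indep k x -> exists f, biorthogonal k x f.
Proof.
elim: k => [|k IH] hx; first by exists (fun _ _ => 0); split.
have [f hf] := IH (IE_indep_prefix (leqnSn k) hx).
have [hfE hfx] := hf.
have hxS := hx.1.
pose z := x k - \sum_(j < k) f j (x k) *: x j.
have hzS : genmod S z.
  apply: (submodB (submod_genmod S)); first exact: hxS.
  apply: (submod_sum (submod_genmod S)) => j _.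
  exact: (submodZ (submod_genmod S) (hxS j (ltnW (ltn_ord j)))).
have hzI : ~ IE E S z.
  move=> hz; apply: (IE_indep_notin_span hx (ltnSn k)).
  by exists (fun j => f j (x k)), z; rewrite subrK.
have [g hEg hgz] := not_IE_unit hzS hzI.
have hg := E_hom hEg.
(* [h] is [g] corrected to vanish on x_0, ..., x_(k-1) and normalised at x_k. *)
pose h w := (g z)^-1 * g w + \sum_(j < k) (- ((g z)^-1 * g (x j))) * f j w.
exists (fun i => if i == k then h else fun w => f i w - f i (x k) * h w).
apply: biorthogonal_extend => //.
- apply: E_add; [exact: E_scale | exact: (E_sum (fun j => - ((g z)^-1 * g (x j))) hfE)].
- move=> j hj; rewrite /h.
  under eq_bigr => l _ do rewrite hfx //.
  by rewrite (sum_mul_delta (fun l : 'I_k => - ((g z)^-1 * g (x l))) (Ordinal hj)) subrr.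
- have gzE : g z = g (x k) - \sum_(j < k) g (x j) * f j (x k).
    rewrite /z (homB hg) (hom_sum hg); congr (_ - _); apply: eq_bigr => j _.
    by rewrite (homZ hg) mulrC.
  have -> : h (x k) = (g z)^-1 * (g (x k) - \sum_(j < k) g (x j) * f j (x k)).
    rewrite /h mulrBr mulr_sumr -sumrN; congr (_ + _); apply: eq_bigr => j _.
    by rewrite mulNr mulrA.
  by rewrite -gzE mulVr.
Qed.

Lemma biorthogonal_free_summand k x f :
  (forall i, (i < k)%N -> genmod S (x i)) -> biorthogonal k x f ->
  exists F, free_E_summand E F k /\ (forall y, F y -> genmod S y).
Proof.
move=> hxS hf; have [hfE _] := hf.
pose e (i : 'I_k) := x i.
pose p (i : 'I_k) := f i.
have hp (i : 'I_k) : is_hom (p i) := E_hom (hfE i (ltn_ord i)).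
have coord c i : p i (\sum_(l < k) c l *: e l) = c i := biorthogonal_coord c i hf.
have hG y i : p i (y - \sum_(l < k) p l y *: e l) = 0.
  by rewrite (homB (hp i)) coord subrr.
exists (span_of e); split; last first.
  move=> _ [c ->]; apply: (submod_sum (submod_genmod S)) => i _.
  exact: (submodZ (submod_genmod S) (hxS i (ltn_ord i))).
exists (fun y => forall i, p i y = 0), e, p.
split; first exact: submod_span.
split.
  split=> [i | y1 y2 h1 h2 i | a y h1 i].
  - by rewrite (hom0 (hp i)).
  - by rewrite (homD (hp i)) h1 h2 addr0.
  - by rewrite (homZ (hp i)) h1 mulr0.
split.
  move=> _ [c ->] hy; rewrite big1 // => i _.
  by rewrite -(coord c i) hy scale0r.
split.
  move=> y; exists (\sum_(l < k) p l y *: e l), (y - \sum_(l < k) p l y *: e l).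
  by split; [exists (fun l => p l y) | exact: hG | rewrite addrC subrK].
split; first exact: span_of_mem.
split; first by [].
split; first by move=> c hc i; rewrite -(coord c i) hc (hom0 (hp i)).
by split; [exact: hG | move=> i; exact: hfE].
Qed.

Lemma free_summand_biorthogonal n F : free_E_summand E F n ->
  exists x f, (forall i, (i < n)%N -> F (x i)) /\ biorthogonal n x f.
Proof.
move=> [G [e [p [hF [hG [hFG [_ [hFe [_ [hfree [hGp hEp]]]]]]]]]]].
have pe i j : p i (e j) = (i == j)%:R.
  have hz : e j - \sum_(l < n) p l (e j) *: e l = 0.
    apply: hFG (hGp (e j)); apply: (submodB hF (hFe j)).
    by apply: (submod_sum hF) => l _; apply: (submodZ hF).
  have /hfree/(_ i)/eqP : \sum_(l < n) ((l == j)%:R - p l (e j)) *: e l = 0.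
    by under eq_bigr => l _ do rewrite scalerBl; rewrite sumrB sum_delta_scale.
  by rewrite subr_eq0 eq_sym => /eqP.
pose x (i : nat) := if @insub _ _ 'I_n i is Some j then e j else 0.
pose f (i : nat) := if @insub _ _ 'I_n i is Some j then p j else fun _ => 0.
have xE i (hi : (i < n)%N) : x i = e (Ordinal hi) by rewrite /x insubT.
have fE i (hi : (i < n)%N) : f i = p (Ordinal hi) by rewrite /f insubT.
exists x, f; split; first by move=> i hi; rewrite xE.
by split=> [i hi | i j hi hj]; rewrite ?fE ?xE ?pe.
Qed.

Lemma submod_IE_span j x : submod (IE_span j x).
Proof.
split.
- exists (fun _ => 0), 0; split; first exact: submod0 IE_submod.
  by rewrite add0r big1 // => i _; rewrite scale0r.
- move=> _ _ [c1 [y1 [h1 ->]]] [c2 [y2 [h2 ->]]].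
  exists (fun i => c1 i + c2 i), (y1 + y2); split; first exact: (submodD IE_submod h1 h2).
  rewrite addrACA -big_split; congr (_ + _); apply: eq_bigr => i _.
  by rewrite scalerDl.
- move=> a _ [c [y0 [h ->]]]; exists (fun i => a * c i), (a *: y0).
  split; first exact: (submodZ IE_submod h).
  rewrite scalerDr scaler_sumr; congr (_ + _); apply: eq_bigr => i _.
  by rewrite scalerA.
Qed.

Lemma IE_span0 x y : IE_span 0 x y <-> IE E S y.
Proof.
split=> [[c [y0 [hy0 ->]]] | hy]; first by rewrite big_ord0 addr0.
by exists (fun _ => 0), y; rewrite big_ord0 addr0.
Qed.

Lemma IE_span_succ j x y : IE_span j x y -> IE_span j.+1 x y.
Proof.
move=> [c [y0 [hy0 ->]]]; exists (fun i => if (i < j)%N then c i else 0), y0.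
split=> //; rewrite big_ord_recr /= ltnn scale0r addr0.
by under [in RHS]eq_bigr => i _ do rewrite ltn_ord.
Qed.

Lemma IE_span_self j x : IE_span j.+1 x (x j).
Proof.
exists (fun i => (i == j)%:R), 0; split; first exact: submod0 IE_submod.
rewrite add0r big_ord_recr /= eqxx scale1r big1 ?add0r // => i _.
by rewrite ltn_eqF // scale0r.
Qed.

Lemma IE_span_genmod j x y :
  (forall i, (i < j)%N -> genmod S (x i)) -> IE_span j x y -> genmod S y.
Proof.
move=> hxS [c [y0 [[hy0 _] ->]]]; apply: (submodD (submod_genmod S) hy0).
apply: (submod_sum (submod_genmod S)) => i _.
exact: (submodZ (submod_genmod S) (hxS i (ltn_ord i))).
Qed.

Lemma IE_indep_extend d x y : IE_indep d x -> genmod S y -> ~ IE_span d x y ->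
  IE_indep d.+1 (fun i => if (i < d)%N then x i else y).
Proof.
move=> [hxS hxI] hy hny; split=> [i hi | c].
  by case: ifP => [/hxS|].
rewrite big_ord_recr /= ltnn; under eq_bigr => i _ do rewrite ltn_ord; move=> hc.
have hcd : maxideal (c d).
  apply/negP => hu; apply: hny.
  exists (fun i => - ((c d)^-1 * c i)), ((c d)^-1 *: (\sum_(i < d) c i *: x i + c d *: y)).
  split; first exact: (submodZ IE_submod hc).
  rewrite scalerDr scalerA mulVr // scale1r scaler_sumr.
  have -> : \sum_(i < d) - ((c d)^-1 * c i) *: x i = - \sum_(i < d) (c d)^-1 *: (c i *: x i).
    by rewrite -sumrN; apply: eq_bigr => i _; rewrite scalerA scaleNr.
  by rewrite addrAC subrr add0r.
have hsum : IE E S (\sum_(i < d) c i *: x i).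
  by have := submodB IE_submod hc (IE_maxidealZ hcd hy); rewrite addrK.
by move=> i; rewrite ltnS leq_eqVlt => /predU1P [-> // | hi]; apply: hxI.
Qed.

Lemma IE_indep_max_span d x y : IE_indep d x ->
  (forall k, (exists x, IE_indep k x) -> (k <= d)%N) -> genmod S y -> IE_span d x y.
Proof.
move=> hx hmax hy; apply: NNPP => hny.
by have := hmax _ (ex_intro _ _ (IE_indep_extend hx hy hny)); rewrite ltnn.
Qed.

Lemma IE_indep_strict_chain d x : IE_indep d x ->
  (forall k, (exists x, IE_indep k x) -> (k <= d)%N) ->
  strict_chain (IE E S) (genmod S) d.
Proof.
move=> hx hmax; exists (fun j => IE_span j x); split.
- by move=> j; apply: submod_IE_span.
- exact: IE_span0.
- by move=> y; split; [exact: IE_span_genmod hx.1 | exact: IE_indep_max_span].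
- by move=> j _; exact: IE_span_succ.
- move=> j hj; exists (x j).
  by split; [exact: IE_span_self | exact: IE_indep_notin_span hx hj].
Qed.

Section StrictChain.
Variables (k : nat) (C : nat -> M -> Prop).
Hypotheses (hC : forall j, submod (C j)) (hC0 : forall y, C 0%N y <-> IE E S y)
  (hCk : forall y, C k y <-> genmod S y)
  (hCS : forall j, (j < k)%N -> forall y, C j y -> C j.+1 y).

Lemma chain_mono i j y : (i <= j <= k)%N -> C i y -> C j y.
Proof.
move=> /andP [hij hjk]; elim: j hij hjk => [|j IH] hij hjk.
  by move: hij; rewrite leqn0 => /eqP ->.
move: hij; rewrite leq_eqVlt => /predU1P [-> // | hij] hy.
by apply: hCS => //; apply: IH => //; apply: ltnW.
Qed.

Lemma chain_transversal_IE_indep x :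
  (forall j, (j < k)%N -> C j.+1 (x j) /\ ~ C j (x j)) -> IE_indep k x.
Proof.
move=> hx.
have hxS i : (i < k)%N -> genmod S (x i).
  move=> hi; apply/hCk; apply: (chain_mono (i := i.+1)); first by rewrite hi leqnn.
  exact: (hx i hi).1.
have hIC i y : (i <= k)%N -> IE E S y -> C i y.
  by move=> hi /hC0; apply: (chain_mono (i := 0%N)); rewrite hi.
split=> // c hc.
have step i : (i < k)%N -> (forall l, (i < l < k)%N -> maxideal (c l)) -> maxideal (c i).
  move=> hi hc_gt; apply/negP => hu; apply: (hx i hi).2.
  have hrest : C i (\sum_(l < k | l != Ordinal hi) c l *: x l).
    apply: (submod_sum (hC i)) => l; rewrite -val_eqE /= neq_ltn => /orP [hli | hil].
    - apply: (submodZ (hC i)); apply: (chain_mono (i := l.+1)).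
        by rewrite hli (ltnW hi).
      exact: (hx l (ltn_ord l)).1.
    - apply: hIC (ltnW hi) _; apply: IE_maxidealZ; last exact: hxS.
      by apply: hc_gt; rewrite hil ltn_ord.
  have htot : C i (\sum_(l < k) c l *: x l) := hIC i _ (ltnW hi) hc.
  rewrite (bigD1 (Ordinal hi)) //= in htot.
  have hci : C i (c i *: x i) by have := submodB (hC i) htot hrest; rewrite addrK.
  by have := submodZ (hC i) (a := (c i)^-1) hci; rewrite scalerA mulVr // scale1r.
have below m i : (i < k)%N -> (k <= i + m)%N -> maxideal (c i).
  elim: m i => [|m IH] i hi hm; first by move: hm; rewrite addn0 leqNgt hi.
  apply: step => // l /andP [hil hlk]; apply: IH => //.
  by rewrite (leq_trans hm) // addnS ltn_add2r.
by move=> i hi; apply: (below k) => //; rewrite leq_addl.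
Qed.

End StrictChain.

Lemma strict_chain_IE_indep k : strict_chain (IE E S) (genmod S) k -> exists x, IE_indep k x.
Proof.
move=> [C [hC hC0 hCk hCS hstrict]].
have [x hx] : exists x : nat -> M, forall j, (j < k)%N -> C j.+1 (x j) /\ ~ C j (x j).
  apply: (functional_choice (fun j y => (j < k)%N -> C j.+1 y /\ ~ C j y)) => j.
  by have [/hstrict [y hy] | _] := ltnP j k; [exists y | exists 0].
by exists x; exact: (chain_transversal_IE_indep hC hC0 hCk hCS hx).
Qed.

End IEIndependence.

Theorem lemma4p6 (R : comUnitRingType) (M : lmodType R)
    (S : M -> Prop) (E : (M -> R) -> Prop) :
  is_local R -> noetherian R -> fin_gen (fun _ : M => True) ->
  hom_submod E ->
  exists d : nat, delta_is E S d /\ quot_length (genmod S) (IE E S) d.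
Proof.
move=> hloc _ [g [v hv]] hE.
have bounded k : (exists x, IE_indep S E k x) -> (k <= g)%N.
  case=> x /(IE_indep_biorthogonal hE) [f [hfE hfx]].
  apply: (biorthogonal_size_le (x := x) (f := f) (v := v)) => // [y | i hi].
  - exact/hv.
  - exact: (E_hom hE (hfE i hi)).
have indep0 : exists x, IE_indep S E 0 x by exists (fun _ => 0); split.
have [d [[x hx] hmax]] := ex_max_nat indep0 bounded.
exists d; split; split.
- have [f hf] := IE_indep_biorthogonal hE hx.
  exact: (biorthogonal_free_summand hE hx.1 hf).
- move=> n F /free_summand_biorthogonal [e [f [heF hf]]] hFS.
  apply: hmax; exists e; apply: (biorthogonal_IE_indep hE _ hf) => i hi.
  exact: (hFS _ (heF i hi)).
- exact: (IE_indep_strict_chain hE hloc hx hmax).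
- move=> k hk; exact: (hmax _ (strict_chain_IE_indep hE hk)).
Qed.
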